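(* Let $\mathcal{A}=(Q,\Sigma,q_I,\delta,\Omega,\mathrm{Cst})$ be a parity automaton with costs. Let $(\rho_j^1)_{j\in\mathbb{N}}$ and $(\rho_j^2)_{j\in\mathbb{N}}$ be sequences of non-empty finite runs of $\mathcal{A}$ such that, for every $j$, $\rho_j^1$ and $\rho_j^2$ have the same type, and such that $\sup_j |\rho_j^2| = d<\infty$ (where $|\rho|$ is the number of transitions of $\rho$). Suppose that $\rho'=\rho_0^1\rho_1^1\rho_2^1\cdots$ is an infinite run (i.e., each $\rho_j^1$ ends in the state in which $\rho_{j+1}^1$ starts), and let $\rho''=\rho_0^2\rho_1^2\rho_2^2\cdots$. If $\limsup_{n\to\infty}\mathrm{Cor}(\rho',n)\le b$ for some $b\in\mathbb{N}$, then $\limsup_{n\to\infty}\mathrm{Cor}(\rho'',n)\le (b+2)\cdot d$. In particular, if $\rho'$ is accepting, then $\rho''$ is accepting as well.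
   Context: A parity automaton with costs is a tuple $\mathcal{A}=(Q,\Sigma,q_I,\delta,\Omega,\mathrm{Cst})$ with a finite set $Q$ of states, a finite alphabet $\Sigma$, an initial state $q_I\in Q$, a deterministic complete transition function $\delta\colon Q\times\Sigma\to Q$ (also viewed as the set of transitions $(q,a,\delta(q,a))$), a coloring $\Omega\colon Q\to\mathbb{N}$, and a cost function $\mathrm{Cst}$ assigning to every transition either $\epsilon$ or $\mathtt{i}$ (the latter are called increment-transitions). Throughout, $\Omega(Q)$ contains both an even and an odd color. A run from $q_0$ on $a_0a_1\cdots$ is the sequence of transitions $(q_0,a_0,q_1)(q_1,a_1,q_2)\cdots$ with $q_{j+1}=\delta(q_j,a_j)$; the cost of a finite run is its number of increment-transitions. For odd $c$, let $\mathrm{Ans}(c)=\{c'\in\Omega(Q)\mid c'>c,\ c'\text{ even}\}$. For an infinite run $\rho=(q_0,a_0,q_1)(q_1,a_1,q_2)\cdots$ and $n\in\mathbb{N}$, $\mathrm{Cor}(\rho,n)=0$ if $\Omega(q_n)$ is even, and otherwise $\mathrm{Cor}(\rho,n)$ is the minimum of the costs of $(q_n,a_n,q_{n+1})\cdots(q_{n'-1},a_{n'-1},q_{n'})$ over all $n'>n$ with $\Omega(q_{n'})\in\mathrm{Ans}(\Omega(q_n))$, with $\min\emptyset=\infty$. An infinite run $\rho$ is accepting if $\limsup_{n\to\infty}\mathrm{Cor}(\rho,n)<\infty$. The type of a non-empty finite run $(q_0,a_0,q_1)\cdots(q_{n-1},a_{n-1},q_n)$ is the tuple $(q_0,q_n,c_0,c_1,\ell)$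 where (with $\max\emptyset=\bot$) $c_0=\max\{\Omega(q_j)\mid 0\le j\le n,\ \Omega(q_j)\text{ even}\}$, $c_1=\max\{\Omega(q_j)\mid 0\le j\le n,\ \Omega(q_j)\text{ odd},\ \Omega(q_{j'})\notin\mathrm{Ans}(\Omega(q_j))\text{ for all }j<j'\le n\}$ (the maximal unanswered request), and $\ell=\mathtt{i}$ iff the run contains an increment-transition, $\ell=\epsilon$ otherwise. *)

From mathcomp Require Import all_boot.
From mathcomp Require Import boolp.

Set Implicit Arguments.
Unset Strict Implicit.
Unset Printing Implicit Defensive.

(* Parity automaton with costs over state type Q and alphabet S.
   Cst q a = true  iff the transition (q, a, delta q a) is an increment-transition. *)
Record pac (Q S : finType) := Pac {
  qI : Q;
  delta : Q -> S -> Q;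
  Omega : Q -> nat;
  Cst : Q -> S -> bool
}.

Section Defs.
Variables (Q S : finType) (A : pac Q S).

Definition answers (c c' : nat) : bool :=
  [&& c < c', ~~ odd c' & [exists q, Omega A q == c']].

Definition frun := (Q * seq S)%type.

Definition fstates (r : frun) : seq Q := r.1 :: scanl (delta A) r.1 r.2.
Definition fstart (r : frun) : Q := r.1.
Definition fend (r : frun) : Q := last r.1 (scanl (delta A) r.1 r.2).
Definition flen (r : frun) : nat := size r.2.
Definition ftrans (r : frun) : seq (Q * S) := zip (fstates r) r.2.

Definition optmax (s : seq nat) : option nat :=
  if s is [::] then None else Some (\max_(x <- s) x).

Definition fcolors (r : frun) : seq nat := map (Omega A) (fstates r).

Definition ftype_c0 (r : frun) : option nat :=
  optmax [seq c <- fcolors r | ~~ odd c].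

(* c1: maximal unanswered request *)
Definition ftype_c1 (r : frun) : option nat :=
  let cs := fcolors r in
  optmax [seq nth 0 cs j | j <- iota 0 (size cs) &
            odd (nth 0 cs j) &&
            all (fun c' => ~~ answers (nth 0 cs j) c') (drop j.+1 cs)].

(* l = i (true) iff the run contains an increment-transition *)
Definition ftype_l (r : frun) : bool := has (fun p => Cst A p.1 p.2) (ftrans r).

Definition ftype (r : frun) : Q * Q * option nat * option nat * bool :=
  (fstart r, fend r, ftype_c0 r, ftype_c1 r, ftype_l r).

Definition is_irun (s : nat -> Q) (w : nat -> S) : Prop :=
  forall n, s n.+1 = delta A (s n) (w n).

Definition offset (rs : nat -> frun) (j : nat) : nat := \sum_(i < j) flen (rs i).

Definition is_concat (rs : nat -> frun) (s : nat -> Q) (w : nat -> S) : Prop :=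
  forall j k, k < flen (rs j) ->
    s (offset rs j + k) = nth (fstart (rs j)) (fstates (rs j)) k /\
    (forall a : S, w (offset rs j + k) = nth a (rs j).2 k).

Definition seg_cost (s : nat -> Q) (w : nat -> S) (n n' : nat) : nat :=
  \sum_(n <= i < n') (Cst A (s i) (w i) : nat).

Definition cor_cand (s : nat -> Q) (w : nat -> S) (n m : nat) : Prop :=
  exists n', n < n' /\ answers (Omega A (s n)) (Omega A (s n')) /\
             seg_cost s w n n' = m.

Lemma cor_cand_ex s w n :
  (exists m, cor_cand s w n m) -> exists m, `[< cor_cand s w n m >].
Proof. by case=> m Hm; exists m; apply/asboolP. Qed.

(* Cor(rho, n) in N u {oo}; None stands for oo *)
Definition Cor (s : nat -> Q) (w : nat -> S) (n : nat) : option nat :=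
  if ~~ odd (Omega A (s n)) then Some 0 else
  match pselect (exists m, cor_cand s w n m) with
  | left h => Some (ex_minn (cor_cand_ex h))
  | right _ => None
  end.

Definition ole (x : option nat) (b : nat) : bool :=
  if x is Some c then c <= b else false.

(* limsup_{n -> oo} Cor(rho, n) <= b  (for N u {oo}-valued sequences and b in N,
   this is: eventually Cor(rho, n) <= b) *)
Definition limsup_Cor_le (s : nat -> Q) (w : nat -> S) (b : nat) : Prop :=
  exists N, forall n, N <= n -> ole (Cor s w n) b.

Definition accepting (s : nat -> Q) (w : nat -> S) : Prop :=
  exists b, limsup_Cor_le s w b.

End Defs.

From Pilot Require Import Defs.
From mathcomp Require Import all_boot boolp zify.

Set Implicit Arguments.
Unset Strict Implicit.
Unset Printing Implicit Defensive.

(* A request at a position of block j of rho''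
   is either answered inside block j, at cost at most d, or it is dominated by
   the maximal unanswered request c1 of block j. Block j of rho' has the same
   type, hence carries c1 unanswered up to its end; far enough in rho' that
   request is answered at cost at most b, so in a later block j2 and by an even
   colour, which is dominated by the maximal even colour c0 of block j2, shared
   by rho''. In between, a block with an increment costs rho' at least 1 and
   rho'' at most d, a block without costs nothing, so the answer in rho'' costs
   at most d + b d + d. *)

Lemma optmax_ub (s : seq nat) x : x \in s -> exists2 m, optmax s = Some m & x <= m.
Proof. by case: s => [//|a s] xs; exists (\max_(y <- a :: s) y); rewrite ?leq_bigmax_seq. Qed.

Lemma optmax_mem (s : seq nat) m : optmax s = Some m -> m \in s.
Proof.
case: s => [//|a s] [<-]; elim: s a => [|b s IH] a; first by rewrite big_seq1 mem_seq1.
by rewrite big_cons /maxn; case: ifP => _; rewrite inE ?eqxx ?IH ?orbT.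
Qed.

Section FiniteRuns.
Variables (Q S : finType) (A : pac Q S).
Implicit Types (r : frun Q S) (cs : seq nat).

Definition unanswered cs (j : nat) : bool :=
  all (fun c' => ~~ answers A (nth 0 cs j) c') (drop j.+1 cs).

Lemma answers_state c q : c < Omega A q -> ~~ odd (Omega A q) -> answers A c (Omega A q).
Proof. by move=> lt_c ev; apply/and3P; split=> //; apply/existsP; exists q. Qed.

Lemma size_fstates r : size (fstates A r) = (flen r).+1.
Proof. by rewrite /= size_scanl. Qed.

Lemma size_fcolors r : size (fcolors A r) = (flen r).+1.
Proof. by rewrite size_map size_fstates. Qed.

Lemma nth_fcolors r x k : k <= flen r ->
  nth 0 (fcolors A r) k = Omega A (nth x (fstates A r) k).
Proof. by move=> le_k; rewrite (nth_map x) // size_fstates. Qed.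

Lemma nth_fstates_flen r x : nth x (fstates A r) (flen r) = fend A r.
Proof. by rewrite /flen -(size_scanl (delta A) r.1) nth_last. Qed.

(* [ftrans] alone would be ssrbool's transitivity of [=1]. *)
Lemma size_ftrans r : size (Defs.ftrans A r) = flen r.
Proof. by rewrite size_zip size_fstates; apply/minn_idPr. Qed.

Lemma ftype_c1_ub r k : k <= flen r -> odd (nth 0 (fcolors A r) k) ->
  unanswered (fcolors A r) k ->
  exists2 c1, ftype_c1 A r = Some c1 & nth 0 (fcolors A r) k <= c1.
Proof.
move=> le_k odd_k un_k; apply: optmax_ub; apply/mapP; exists k; last by [].
by rewrite mem_filter -/(unanswered (fcolors A r) k) un_k odd_k mem_iota size_fcolors ltnS le_k.
Qed.

Lemma ftype_c1_witness r c1 : ftype_c1 A r = Some c1 ->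
  exists2 k, k <= flen r &
    [/\ nth 0 (fcolors A r) k = c1, odd c1 & unanswered (fcolors A r) k].
Proof.
move=> /optmax_mem /mapP [k]; rewrite mem_filter mem_iota size_fcolors /=.
by move=> /andP [/andP [odd_k un_k] lt_k] ->; exists k.
Qed.

Lemma ftype_c0_ub r k : k <= flen r -> ~~ odd (nth 0 (fcolors A r) k) ->
  exists2 c0, ftype_c0 A r = Some c0 & nth 0 (fcolors A r) k <= c0.
Proof.
by move=> le_k ev_k; apply: optmax_ub; rewrite mem_filter ev_k mem_nth ?size_fcolors.
Qed.

Lemma ftype_c0_witness r c0 : ftype_c0 A r = Some c0 ->
  exists2 k, k <= flen r & nth 0 (fcolors A r) k = c0 /\ ~~ odd c0.
Proof.
move=> /optmax_mem; rewrite mem_filter => /andP [ev /(nthP 0) [k lt_k col_k]].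
by exists k; [rewrite -ltnS -size_fcolors | rewrite col_k].
Qed.

End FiniteRuns.

Section Cor.
Variables (Q S : finType) (A : pac Q S) (s : nat -> Q) (w : nat -> S).

Lemma seg_cost_cat a b c : a <= b -> b <= c ->
  seg_cost A s w a c = seg_cost A s w a b + seg_cost A s w b c.
Proof. exact: big_cat_nat. Qed.

Lemma seg_cost_le a b : seg_cost A s w a b <= b - a.
Proof.
rewrite -[b - a]muln1 -sum_nat_const_nat; apply: leq_sum => i _; exact: leq_b1.
Qed.

Lemma seg_cost_sub a a' b' b : a <= a' -> a' <= b' -> b' <= b ->
  seg_cost A s w a' b' <= seg_cost A s w a b.
Proof.
move=> le_a le_a'b' le_b.
rewrite (seg_cost_cat le_a (leq_trans le_a'b' le_b)) (seg_cost_cat le_a'b' le_b).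
by rewrite addnCA leq_addr.
Qed.

Lemma ole_leq x m m' : m <= m' -> ole x m -> ole x m'.
Proof. by case: x => //= c le_m le_c; apply: leq_trans le_c le_m. Qed.

Lemma Cor_even n m : ~~ odd (Omega A (s n)) -> ole (Cor A s w n) m.
Proof. by rewrite /Cor => ->. Qed.

Lemma Cor_le_answer n n' m : n < n' -> answers A (Omega A (s n)) (Omega A (s n')) ->
  seg_cost A s w n n' <= m -> ole (Cor A s w n) m.
Proof.
move=> lt_n ans le_m; rewrite /Cor; case: ifP => // _.
case: pselect => [cand|]; last by case; exists (seg_cost A s w n n'), n'.
case: ex_minnP => x _ min_x /=; apply: leq_trans le_m; apply: min_x.
by apply/asboolP; exists n'.
Qed.

Lemma Cor_le_answer_ex n b : odd (Omega A (s n)) -> ole (Cor A s w n) b ->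
  exists n', [/\ n < n', answers A (Omega A (s n)) (Omega A (s n')) &
                 seg_cost A s w n n' <= b].
Proof.
rewrite /Cor => ->; case: pselect => [cand|//].
case: ex_minnP => x /asboolP [n' [lt_n [ans <-]]] _ le_b.
by exists n'.
Qed.

End Cor.

Section Concatenation.
Variables (Q S : finType) (A : pac Q S) (rs : nat -> frun Q S).
Variables (s : nat -> Q) (w : nat -> S).

Definition inc_blocks (a c : nat) : nat := \sum_(a <= t < c) ftype_l A (rs t).

Lemma offset0 : offset rs 0 = 0.
Proof. by rewrite /offset big_ord0. Qed.

Lemma offsetS j : offset rs j.+1 = offset rs j + flen (rs j).
Proof. by rewrite /offset big_ord_recr. Qed.

Lemma leq_offset i j : i <= j -> offset rs i <= offset rs j.
Proof.
move=> /subnK <-; elim: (j - i) => [//|m IH].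
by rewrite addSn offsetS (leq_trans IH) ?leq_addr.
Qed.

Lemma offset_le_mul d : (forall j, flen (rs j) <= d) -> forall j, offset rs j <= j * d.
Proof.
move=> le_d; elim=> [|j IH]; first by rewrite offset0.
by rewrite offsetS mulSn addnC leq_add.
Qed.

Lemma block_index_lt i j k : k < flen (rs j) -> offset rs i.+1 <= offset rs j + k -> i < j.
Proof.
move=> lt_k le_off; rewrite ltnNge; apply/negP => le_ji.
by have := leq_offset (le_ji : j.+1 <= i.+1); rewrite !offsetS in le_off *; lia.
Qed.

Hypothesis rs_ne : forall j, 0 < flen (rs j).

Lemma leq_offset_index j : j <= offset rs j.
Proof. by elim: j => [//|j IH]; rewrite offsetS; have := rs_ne j; lia. Qed.

Lemma offset_block n : exists j k, k < flen (rs j) /\ n = offset rs j + k.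
Proof.
elim: n => [|n [j [k [lt_k ->]]]]; first by exists 0, 0; rewrite offset0 rs_ne.
case: (ltnP k.+1 (flen (rs j))) => [lt_k1|le_k1]; first by exists j, k.+1; rewrite addnS.
by exists j.+1, 0; rewrite rs_ne offsetS; split => //; lia.
Qed.

Hypothesis rs_concat : is_concat A rs s w.

Lemma nth_ftrans_concat j k x : k < flen (rs j) ->
  nth x (Defs.ftrans A (rs j)) k = (s (offset rs j + k), w (offset rs j + k)).
Proof.
move=> lt_k; have [-> w_k] := rs_concat lt_k; case: x => q a.
rewrite nth_zip_cond -/(Defs.ftrans A (rs j)) size_ftrans lt_k (w_k a).
by rewrite (set_nth_default q (fstart (rs j))) // size_fstates ltnW.
Qed.

Lemma seg_cost_block j : seg_cost A s w (offset rs j) (offset rs j.+1) =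
  \sum_(p <- Defs.ftrans A (rs j)) Cst A p.1 p.2.
Proof.
rewrite (big_nth (fstart (rs j), w 0)) size_ftrans /seg_cost offsetS.
rewrite -{1}[offset rs j]add0n big_addn addKn !big_mkord.
by apply: eq_bigr => k _; rewrite nth_ftrans_concat // addnC.
Qed.

Lemma seg_cost_block_gt0 j :
  (0 < seg_cost A s w (offset rs j) (offset rs j.+1)) = ftype_l A (rs j).
Proof. by rewrite lt0n seg_cost_block sum_nat_seq_neq0; apply: eq_has => p; case: Cst. Qed.

Lemma seg_cost_blocks a c : a <= c ->
  seg_cost A s w (offset rs a) (offset rs c) =
  \sum_(a <= t < c) seg_cost A s w (offset rs t) (offset rs t.+1).
Proof.
move=> /subnK <-; elim: (c - a) => [|m IH]; first by rewrite add0n /seg_cost !big_geq.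
rewrite addSn big_nat_recr ?leq_addl //= -IH.
by rewrite (@seg_cost_cat _ _ A s w _ (offset rs (m + a))) ?leq_offset ?leq_addl.
Qed.

Lemma inc_blocks_le_seg_cost a c : a <= c ->
  inc_blocks a c <= seg_cost A s w (offset rs a) (offset rs c).
Proof.
move=> le_ac; rewrite seg_cost_blocks //; apply: leq_sum => t _.
by rewrite -seg_cost_block_gt0; case: (seg_cost _ _ _ _ _).
Qed.

Lemma seg_cost_le_inc_blocks d a c : (forall j, flen (rs j) <= d) -> a <= c ->
  seg_cost A s w (offset rs a) (offset rs c) <= inc_blocks a c * d.
Proof.
move=> le_d le_ac; rewrite seg_cost_blocks // big_distrl; apply: leq_sum => t _ /=.
rewrite -seg_cost_block_gt0; case: posnP => [-> //|_].
by rewrite mul1n (leq_trans (seg_cost_le _ _ _ _ _)) // offsetS addKn.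
Qed.

Lemma seg_cost_across_blocks d j k j2 k2 : (forall j, flen (rs j) <= d) ->
  k <= flen (rs j) -> j < j2 -> k2 <= flen (rs j2) ->
  seg_cost A s w (offset rs j + k) (offset rs j2 + k2) <= (inc_blocks j.+1 j2 + 2) * d.
Proof.
move=> le_d le_k lt_j le_k2.
have le_j1 : offset rs j + k <= offset rs j.+1 by rewrite offsetS leq_add2l.
have le_j2 : offset rs j.+1 <= offset rs j2 := leq_offset lt_j.
rewrite (seg_cost_cat A s w le_j1) ?(leq_trans le_j2) ?leq_addr //.
rewrite (seg_cost_cat A s w le_j2) ?leq_addr //.
have first_block : seg_cost A s w (offset rs j + k) (offset rs j.+1) <= d.
  by rewrite (leq_trans (seg_cost_le _ _ _ _ _)) // offsetS subnDl (leq_trans (leq_subr _ _)).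
have last_block : seg_cost A s w (offset rs j2) (offset rs j2 + k2) <= d.
  by rewrite (leq_trans (seg_cost_le _ _ _ _ _)) // addKn (leq_trans le_k2).
have middle := seg_cost_le_inc_blocks le_d lt_j.
by rewrite mulnDl; lia.
Qed.

Hypothesis rs_chain : forall j, fend A (rs j) = fstart (rs j.+1).

Lemma Omega_concat j k : k <= flen (rs j) ->
  Omega A (s (offset rs j + k)) = nth 0 (fcolors A (rs j)) k.
Proof.
move=> le_k; rewrite (nth_fcolors _ (fstart (rs j)) le_k).
move: le_k; rewrite leq_eqVlt => /predU1P [->|lt_k]; last by case: (rs_concat lt_k) => ->.
rewrite nth_fstates_flen -offsetS rs_chain -[offset _ _]addn0.
by case: (rs_concat (rs_ne j.+1)) => ->.
Qed.

Lemma Cor_answer_in_block j k : k <= flen (rs j) ->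
  ~~ unanswered A (fcolors A (rs j)) k -> ole (Cor A s w (offset rs j + k)) (flen (rs j)).
Proof.
move=> le_k; rewrite -has_predC => /(has_nthP 0) [i].
rewrite size_drop size_fcolors nth_drop subSS => lt_i /negPn ans.
have le_ki : k.+1 + i <= flen (rs j) by rewrite -ltnS; lia.
apply: (@Cor_le_answer _ _ _ _ _ _ (offset rs j + (k.+1 + i))); first lia.
  by rewrite !Omega_concat.
by rewrite (leq_trans (seg_cost_le _ _ _ _ _)) //; lia.
Qed.

Lemma unanswered_answer_after_block j k n' : k <= flen (rs j) ->
  unanswered A (fcolors A (rs j)) k -> offset rs j + k < n' ->
  answers A (nth 0 (fcolors A (rs j)) k) (Omega A (s n')) -> offset rs j.+1 < n'.
Proof.
move=> le_k /allP un_k lt_n'; rewrite ltnNge offsetS; apply: contraTN => le_n'.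
have -> : n' = offset rs j + (n' - offset rs j) by lia.
rewrite Omega_concat; last lia.
apply: un_k; rewrite -[n' - _](@subnKC k.+1) -?nth_drop; last lia.
by rewrite mem_nth // size_drop size_fcolors; lia.
Qed.

Lemma Cor_le_answer_later_block j k b : k <= flen (rs j) ->
  odd (nth 0 (fcolors A (rs j)) k) -> unanswered A (fcolors A (rs j)) k ->
  ole (Cor A s w (offset rs j + k)) b ->
  exists j2, [/\ j < j2, inc_blocks j.+1 j2 <= b &
    exists2 e, ftype_c0 A (rs j2) = Some e & nth 0 (fcolors A (rs j)) k < e].
Proof.
move=> le_k odd_k un_k; rewrite -Omega_concat // in odd_k.
move=> /(Cor_le_answer_ex odd_k) [n' [lt_n' ans cost]].
rewrite Omega_concat // in ans.
have after := unanswered_answer_after_block le_k un_k lt_n' ans.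
have [j2 [k2 [lt_k2 n'E]]] := offset_block n'.
have lt_jj2 : j < j2 by apply: block_index_lt lt_k2 _; rewrite -n'E ltnW.
exists j2; split=> //.
  apply: leq_trans (inc_blocks_le_seg_cost lt_jj2) (leq_trans _ cost).
  by apply: seg_cost_sub; rewrite ?n'E ?leq_addr ?leq_offset // offsetS leq_add2l.
move: ans; rewrite n'E (Omega_concat (ltnW lt_k2)) => /and3P [lt_ke ev_e _].
have [e c0_e le_e] := ftype_c0_ub (ltnW lt_k2) ev_e.
by exists e; last exact: leq_trans le_e.
Qed.

End Concatenation.

Section Transfer.
Variables (Q S : finType) (A : pac Q S) (r1 r2 : nat -> frun Q S) (d b : nat).
Variables (s1 : nat -> Q) (w1 : nat -> S) (s2 : nat -> Q) (w2 : nat -> S).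
Hypotheses (r1_ne : forall j, 0 < flen (r1 j)) (r2_ne : forall j, 0 < flen (r2 j)).
Hypothesis same_type : forall j, ftype A (r1 j) = ftype A (r2 j).
Hypothesis r2_le_d : forall j, flen (r2 j) <= d.
Hypothesis r1_chain : forall j, fend A (r1 j) = fstart (r1 j.+1).
Hypotheses (r1_concat : is_concat A r1 s1 w1) (r2_concat : is_concat A r2 s2 w2).

Lemma r2_chain j : fend A (r2 j) = fstart (r2 j.+1).
Proof.
move: (same_type j) (same_type j.+1); rewrite /ftype => [[_ <- _ _ _] [<- _ _ _ _]].
exact: r1_chain.
Qed.

Lemma same_c0 j : ftype_c0 A (r1 j) = ftype_c0 A (r2 j).
Proof. by move: (same_type j); rewrite /ftype => [[]]. Qed.

Lemma same_c1 j : ftype_c1 A (r1 j) = ftype_c1 A (r2 j).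
Proof. by move: (same_type j); rewrite /ftype => [[]]. Qed.

Lemma same_inc_blocks a c : inc_blocks A r1 a c = inc_blocks A r2 a c.
Proof. by apply: eq_bigr => t _; move: (same_type t); rewrite /ftype => [[_ _ _ _ ->]]. Qed.

Lemma Cor_transfer N : (forall p, N <= p -> ole (Cor A s1 w1 p) b) ->
  forall j k, N <= j -> k < flen (r2 j) -> ole (Cor A s2 w2 (offset r2 j + k)) ((b + 2) * d).
Proof.
move=> Cor1_le j k le_Nj lt_k; set n := offset r2 j + k.
have col2 := Omega_concat r2_ne r2_concat r2_chain.
have col_n : Omega A (s2 n) = nth 0 (fcolors A (r2 j)) k := col2 _ _ (ltnW lt_k).
have [odd_n|] := boolP (odd (Omega A (s2 n))); last exact: Cor_even.
have [un_k|ans_k] := boolP (unanswered A (fcolors A (r2 j)) k); last first.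
  apply: ole_leq (Cor_answer_in_block r2_ne r2_concat r2_chain (ltnW lt_k) ans_k).
  by have := r2_le_d j; nia.
rewrite col_n in odd_n.
have [c1 c1_r2 le_c1] := ftype_c1_ub (ltnW lt_k) odd_n un_k.
rewrite -same_c1 in c1_r2.
have [k1 le_k1 [col_k1 odd_c1 un_k1]] := ftype_c1_witness c1_r2.
have le_Np : N <= offset r1 j + k1.
  by rewrite (leq_trans le_Nj) // (leq_trans (leq_offset_index r1_ne j)) ?leq_addr.
rewrite -col_k1 in odd_c1.
have [j2 [lt_jj2 inc_le_b [e c0_e lt_c1e]]] :=
  Cor_le_answer_later_block r1_ne r1_concat r1_chain le_k1 odd_c1 un_k1 (Cor1_le _ le_Np).
rewrite same_c0 in c0_e.
have [k3 le_k3 [col_k3 ev_e]] := ftype_c0_witness c0_e.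
apply: (@Cor_le_answer _ _ _ _ _ _ (offset r2 j2 + k3)).
- rewrite /n (leq_trans _ (leq_addr _ _)) // (leq_trans _ (leq_offset r2 lt_jj2)) //.
  by rewrite offsetS ltn_add2l.
- by apply: answers_state; rewrite ?col_n col2 ?col_k3 //; lia.
- rewrite (leq_trans (seg_cost_across_blocks r2_concat r2_le_d (ltnW lt_k) lt_jj2 le_k3)) //.
  by rewrite -same_inc_blocks leq_mul2r leq_add2r inc_le_b orbT.
Qed.

Lemma limsup_Cor_transfer : limsup_Cor_le A s1 w1 b -> limsup_Cor_le A s2 w2 ((b + 2) * d).
Proof.
move=> [N Cor1_le]; exists (N * d) => n le_n.
have [j [k [lt_k n_eq]]] := offset_block r2_ne n; subst n.
apply: Cor_transfer Cor1_le _ _ _ (lt_k).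
have d_gt0 : 0 < d := leq_trans (r2_ne j) (r2_le_d j).
rewrite -ltnS -(ltn_pmul2r d_gt0) (leq_ltn_trans le_n) //.
by rewrite (leq_trans _ (offset_le_mul r2_le_d j.+1)) // offsetS ltn_add2l.
Qed.

End Transfer.

Theorem lemma1 (Q S : finType) (A : pac Q S)
  (Hcol : (exists q, odd (Omega A q)) /\ (exists q, ~~ odd (Omega A q)))
  (r1 r2 : nat -> frun Q S) (d b : nat)
  (Hne1 : forall j, 0 < flen (r1 j))
  (Hne2 : forall j, 0 < flen (r2 j))
  (Htype : forall j, ftype A (r1 j) = ftype A (r2 j))
  (Hd : (forall j, flen (r2 j) <= d) /\ (exists j, flen (r2 j) = d))
  (Hchain : forall j, fend A (r1 j) = fstart (r1 j.+1))
  (s1 : nat -> Q) (w1 : nat -> S) (s2 : nat -> Q) (w2 : nat -> S)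
  (Hrun1 : is_irun A s1 w1) (Hc1 : is_concat A r1 s1 w1)
  (Hc2 : is_concat A r2 s2 w2) :
  (limsup_Cor_le A s1 w1 b -> limsup_Cor_le A s2 w2 ((b + 2) * d)) /\
  (accepting A s1 w1 -> accepting A s2 w2).
Proof.
have [le_d _] := Hd.
have transfer b' := limsup_Cor_transfer (b := b') Hne1 Hne2 Htype le_d Hchain Hc1 Hc2.
split; first exact: transfer.
by move=> [b' Hb']; exists ((b' + 2) * d); exact: transfer.
Qed.
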